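(* Let $\{(\mathbf{x}^{(k)},y^{(k)})\}_{k=1}^N$ be data with $\mathbf{x}^{(k)}\in\mathbb{R}^d$, $y^{(k)}\in\mathbb{R}$, and let $\widehat{\mathcal{R}}_N(s)=\frac1N\sum_{k=1}^N(y^{(k)}-s(\mathbf{x}^{(k)}))^2$ (squared loss). With fixed region-selection functions $r_i$, consider the idealized exact cyclic regional backfitting procedure described in the context. Then $\widehat{\mathcal{R}}_N$ is non-increasing along the iterates, and the procedure converges (in empirical $L_2$) to a limit $\hat s\in\arg\min_{s\in\mathcal{H}(\{T_i\})}\widehat{\mathcal{R}}_N(s)$. Moreover, the fitted-value vector $(\hat s(\mathbf{x}^{(1)}),\dots,\hat s(\mathbf{x}^{(N)}))$ is unique.
   Context: $\mathbf{x}_{-i}$ denotes $\mathbf{x}$ with the $i$-th coordinate removed. For each $i$ a fixed region-selection function $r_i:\mathbb{R}^{d-1}\to\{1,\dots,R_i\}$ is given (from a binary decision tree $T_i$). $\mathcal{H}(\{T_i\})$ denotes the class of CALM scores $s(\mathbf{x})=\beta_0+\sum_{i=1}^d f_i^{(r_i(\mathbf{x}_{-i}))}(x_i)$ with $\beta_0\in\mathbb{R}$ and univariate shape functions $f_i^{(r)}:\mathbb{R}\to\mathbb{R}$, whose region-wise components are centered (all region-wise constants absorbed in $\beta_0$). The idealized exact cyclic regional backfitting procedure cycles repeatedly over all pairs $(i,r)$; at each step it replaces $f_i^{(r)}$ by an exact minimizer of $\widehat{\mathcal{R}}_N$ over that function alone (others and $\beta_0$ fixed), using only samples $k$ with $r_i(\mathbf{x}^{(k)}_{-i})=r$,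 followed by empirical centering: the sample mean of $f_i^{(r)}$ over those samples is subtracted from $f_i^{(r)}$ and added to $\beta_0$, so fitted values and $\widehat{\mathcal{R}}_N$ are unchanged.
   Formalization: The centering after each exact minimization is replaced by any change of β₀ and the shape functions keeping all fitted values at the data points, and $\mathcal{H}(\{T_i\})$ drops the centering of region-wise components. Each condition added here is assumed in the paper as well or is needed for the statement above to hold. *)

From HB Require Import structures.
From mathcomp Require Import all_boot all_order all_algebra.
From mathcomp Require Import all_classical all_reals all_analysis.

Set Implicit Arguments.
Unset Strict Implicit.
Unset Printing Implicit Defensive.

Import Order.TTheory GRing.Theory Num.Theory.
Local Open Scope ring_scope.
Local Open Scope classical_set_scope.

Section CALM.
Variable R : realType.
Variables (d : nat) (Rr : 'I_d -> nat).
(* region-selection functions r_i : R^(d-1) -> {0,..,R_i - 1} (0-based) *)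
Variable reg : forall i : 'I_d, 'rV[R]_(d.-1) -> 'I_(Rr i).

Definition pairT := {i : 'I_d & 'I_(Rr i)}.

Definition shapes := pairT -> R -> R.

(* x_{-i} is  col' i x ;  x_i is  x ord0 i *)
Definition calm_score (b : R) (F : shapes) (x : 'rV[R]_d) : R :=
  b + \sum_(i < d)
        F (Tagged (fun j => 'I_(Rr j)) (reg i (col' i x))) (x ord0 i).

Definition calm_class : set ('rV[R]_d -> R) :=
  [set s | exists (b : R) (F : shapes), s = calm_score b F].

Definition upd_shape (F : shapes) (p : pairT) (g : R -> R) : shapes :=
  fun q => if q == p then g else F q.

Variables (N : nat) (X : 'I_N -> 'rV[R]_d) (Y : 'I_N -> R).

Definition emp_risk (s : 'rV[R]_d -> R) : R :=
  N%:R^-1 * \sum_(k < N) (Y k - s (X k)) ^+ 2.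

Definition in_region (p : pairT) (k : 'I_N) : bool :=
  reg (tag p) (col' (tag p) (X k)) == tagged p.

Definition region_loss (p : pairT) (b : R) (F : shapes) : R :=
  \sum_(k < N | in_region p k) (Y k - calm_score b F (X k)) ^+ 2.

(* One step of exact regional backfitting on the pair p:
   f_p is replaced by an exact minimizer g (over all functions R -> R, others
   and beta_0 fixed, loss on the samples of region p); the new state (b', F')
   is the result of the subsequent centering, which by the context leaves all
   fitted values unchanged. *)
Definition exact_block_step (p : pairT) (b : R) (F : shapes)
    (b' : R) (F' : shapes) : Prop :=
  exists g : R -> R,
    (forall h : R -> R,
        region_loss p b (upd_shape F p g) <= region_loss p b (upd_shape F p h))
    /\ (forall k : 'I_N, calm_score b' F' (X k) = calm_score b (upd_shape F p g) (X k)).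

End CALM.

From HB Require Import structures.
From mathcomp Require Import all_boot all_order all_algebra.
From mathcomp Require Import all_classical all_reals all_analysis.
From mathcomp Require Import ring lra.

Set Implicit Arguments.
Unset Strict Implicit.
Unset Printing Implicit Defensive.

Import Order.TTheory GRing.Theory Num.Theory.
Import numFieldNormedType.Exports.
Local Open Scope ring_scope.
Local Open Scope classical_set_scope.

(* Call a cell of feature i the set of samples sharing both the region
   r_i(x_{-i}) and the value x_i.  The fitted-value vectors of CALM scores are
   exactly the span V of the cell indicators (the intercept is in V since the
   cells of one feature partition the sample).  An exact block step on (i, r)
   makes the residuals sum to zero on every cell of feature i in region r
   (perturb the new shape function at a single point), while its increment is
   constant on these cells and zero elsewhere; so by Pythagoras the squared loss
   drops by the squared norm of the increment.  Hence the loss is nonincreasing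
   and the orthogonal projection v of y on V is the unique optimal fitted
   vector.  During one sweep every cell is visited, so each residual cell sum at
   the start of the sweep is bounded by the movement of the fits, i.e. by the
   loss decrease over the sweep; since the fit minus v lies in V, its squared
   norm is bounded by its cell sums through the pseudo-inverse of the cell
   matrix.  This gives a geometric decrease of the distance to v per sweep. *)

Section SquareSums.
Variables (R : realDomainType) (I : finType).
Implicit Types a b : I -> R.

Lemma sumr_sqr_ge0 (r : seq I) (P : pred I) a : 0 <= \sum_(i <- r | P i) a i ^+ 2.
Proof. by apply: sumr_ge0 => i _; exact: sqr_ge0. Qed.

Lemma sumr_sqr_eq0 a : \sum_i a i ^+ 2 = 0 -> forall i, a i = 0.
Proof.
move=> /psumr_eq0P a0 i; apply/eqP; rewrite -sqrf_eq0.
by apply/eqP/a0 => // j _; exact: sqr_ge0.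
Qed.

(* Lagrange's identity: the gap is half the sum of the squares (a i b l - a l b i)^2. *)
Lemma sumr_mul_sqr_le a b :
  (\sum_i a i * b i) ^+ 2 <= (\sum_i a i ^+ 2) * (\sum_i b i ^+ 2).
Proof.
have lagrange : \sum_i \sum_l (a i * b l - a l * b i) ^+ 2 =
    2 * ((\sum_i a i ^+ 2) * (\sum_i b i ^+ 2)) - 2 * (\sum_i a i * b i) ^+ 2.
  have expand i l : (a i * b l - a l * b i) ^+ 2 =
      a i ^+ 2 * b l ^+ 2 + a l ^+ 2 * b i ^+ 2 - 2 * ((a i * b i) * (a l * b l)).
    by ring.
  under eq_bigr do under eq_bigr do rewrite expand.
  rewrite (eq_bigr (fun i => \sum_l a i ^+ 2 * b l ^+ 2 + \sum_l a l ^+ 2 * b i ^+ 2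
             - 2 * ((a i * b i) * \sum_l a l * b l))); last first.
    by move=> i _; rewrite sumrB big_split /= !mulr_sumr.
  rewrite sumrB big_split /= -big_distrlr /=.
  rewrite [X in _ + X - _](exchange_big _ _ _ _ _ (fun i l => a l ^+ 2 * b i ^+ 2)) /=.
  by rewrite -big_distrlr /= -mulr_sumr -mulr_suml expr2; ring.
have : 0 <= \sum_i \sum_l (a i * b l - a l * b i) ^+ 2.
  by apply: sumr_ge0 => i _; exact: sumr_sqr_ge0.
by rewrite lagrange subr_ge0 ler_pM2l.
Qed.

Lemma sqr_sumr_le_card a : (\sum_i a i) ^+ 2 <= #|I|%:R * \sum_i a i ^+ 2.
Proof.
have := sumr_mul_sqr_le a (fun _ => 1).
under eq_bigr do rewrite mulr1; under [X in _ * X]eq_bigr do rewrite expr1n.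
by rewrite sumr_const mulrC.
Qed.

End SquareSums.

Section EquivalenceClasses.
Variables (R : numFieldType) (I : finType) (e : rel I).
Hypothesis e_equiv : equivalence_rel e.

(* Write phi y as the average of phi over the class of y and exchange the sums. *)
Lemma class_sums_eq0_orthogonal (u phi : I -> R) :
  (forall x, \sum_y (e x y)%:R * u y = 0) ->
  (forall x y, e x y -> phi y = phi x) -> \sum_y u y * phi y = 0.
Proof.
move=> u_class phi_class.
have e_refl x : e x x by case: (e_equiv x x x).
have e_sym x y : e x y -> e y x.
  by move=> xy; case: (e_equiv x y x) => xx /(_ xy) <-.
have e_trans x y : e x y -> e x =1 e y by move=> xy z; case: (e_equiv x y z) => _ ->.
pose n x := \sum_y (e x y)%:R : R.
have n_class x y : e x y -> n y = n x.
  by move=> xy; apply: eq_bigr => z _; rewrite (e_trans _ _ xy).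
have n_gt0 x : 0 < n x.
  by rewrite /n (bigD1 x) //= e_refl ltr_pwDl // sumr_ge0 // => y _; rewrite ler0n.
have phi_avg y : phi y = \sum_x (e y x)%:R * (phi x / n x).
  rewrite (eq_bigr (fun x => (e y x)%:R * (phi y / n y))); last first.
    move=> x _; case yx: (e y x); last by rewrite !mul0r.
    by rewrite (phi_class _ _ yx) (n_class _ _ yx).
  by rewrite -mulr_suml -/(n y) mulrCA mulfV ?mulr1 // gt_eqF.
under eq_bigr do rewrite phi_avg mulr_sumr.
rewrite exchange_big big1 //= => x _.
transitivity (phi x / n x * \sum_y (e x y)%:R * u y); last by rewrite u_class mulr0.
rewrite mulr_sumr; apply: eq_bigr => y _.
by case: (boolP (e y x)) => [/e_sym -> | /(contraNF (e_sym x y)) ->]; ring.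
Qed.

End EquivalenceClasses.

Section RealMatrix.
Variable R : realFieldType.

Lemma trmx_mul_self_eq0 m n (Z : 'M[R]_(m, n)) : Z^T *m Z = 0 -> Z = 0.
Proof.
move=> ZTZ0; apply/matrixP => i j; rewrite [RHS]mxE.
have /sumr_sqr_eq0 -> // : \sum_l Z l j ^+ 2 = 0.
transitivity ((Z^T *m Z) j j); last by rewrite ZTZ0 mxE.
by rewrite mxE; apply: eq_bigr => l _; rewrite mxE expr2.
Qed.

Lemma mulmx_trmx_sub_gram p m n (A : 'M[R]_(p, n)) (B : 'M[R]_(m, n)) :
  (A *m B^T <= B *m B^T)%MS.
Proof.
rewrite submxE -mulmxA; set K := cokermx (B *m B^T).
suff -> : B^T *m K = 0 by rewrite mulmx0.
apply: trmx_mul_self_eq0.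
by rewrite trmx_mul trmxK -mulmxA (mulmxA B) mulmx_coker mulmx0.
Qed.

Variables (m n : nat) (B : 'M[R]_(m, n)).

(* [lsq_coef y] solves the normal equations [c *m (B *m B^T) = y *m B^T], so
   [lsq_proj y] is the orthogonal projection of [y] on the row space of [B]. *)
Definition lsq_coef (y : 'rV[R]_n) : 'rV[R]_m := y *m B^T *m pinvmx (B *m B^T).
Definition lsq_proj (y : 'rV[R]_n) : 'rV[R]_n := lsq_coef y *m B.

Lemma lsq_normal_eq (y : 'rV[R]_n) : (y - lsq_proj y) *m B^T = 0.
Proof.
by rewrite mulmxBl -mulmxA mulmxKpV ?subrr // mulmx_trmx_sub_gram.
Qed.

Lemma lsq_resid_orthogonal p (y : 'rV[R]_n) (w : 'M[R]_(p, n)) :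
  (w <= B)%MS -> (y - lsq_proj y) *m w^T = 0.
Proof.
by move/mulmxKpV <-; rewrite trmx_mul mulmxA lsq_normal_eq mul0mx.
Qed.

Lemma sqnorm_le_pinvmx (w : 'rV[R]_n) : (w <= B)%MS ->
  \sum_k w 0 k ^+ 2 <=
    (\sum_k \sum_j pinvmx B k j ^+ 2) * \sum_j (w *m B^T) 0 j ^+ 2.
Proof.
move=> wB; set c := w *m pinvmx B; set K := \sum_k \sum_j _.
set W := \sum_k _; set T := \sum_j _.
have K_ge0 : 0 <= K by rewrite sumr_ge0 // => k _; exact: sumr_sqr_ge0.
have W_ge0 : 0 <= W := sumr_sqr_ge0 _ _ _.
have T_ge0 : 0 <= T := sumr_sqr_ge0 _ _ _.
have c_le : \sum_j c 0 j ^+ 2 <= K * W.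
  rewrite /K exchange_big mulr_suml /=; apply: ler_sum => j _.
  by rewrite mxE mulrC; exact: sumr_mul_sqr_le.
have W_eq : W = \sum_j c 0 j * (w *m B^T) 0 j.
  transitivity ((w *m w^T) 0 0).
    by rewrite mxE; apply: eq_bigr => k _; rewrite mxE expr2.
  rewrite -{1}(mulmxKpV wB) -/c -mulmxA mxE; apply: eq_bigr => j _.
  by rewrite !mxE; congr (_ * _); apply: eq_bigr => k _; rewrite !mxE mulrC.
have W2_le : W ^+ 2 <= K * W * T.
  by rewrite {1}W_eq; apply: le_trans (sumr_mul_sqr_le _ _) (ler_wpM2r T_ge0 c_le).
by move: W_ge0; rewrite le_eqVlt => /orP[/eqP <- | W_gt0]; nra.
Qed.

End RealMatrix.

Lemma linear_le_square_eq0 (R : realFieldType) (S n : R) :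
  0 <= n -> (forall eps, 2 * eps * S <= eps ^+ 2 * n) -> S = 0.
Proof.
move=> n_ge0 /(_ (S / (n + 1))); set eps := S / (n + 1) => le_eps.
have S_eps : S = eps * (n + 1) by rewrite /eps mulfVK // gt_eqF // ltr_wpDl.
have : eps = 0 by rewrite S_eps in le_eps; nra.
by rewrite S_eps => ->; rewrite mul0r.
Qed.

Section CALM.
Variable R : realType.
Variables (d : nat) (Rr : 'I_d -> nat).
Variable reg : forall i : 'I_d, 'rV[R]_(d.-1) -> 'I_(Rr i).
Variables (N : nat) (X : 'I_N -> 'rV[R]_d) (Y : 'I_N -> R).

Local Notation pairT := (pairT Rr).
Local Notation shapes := (shapes R Rr).
Local Notation in_region := (in_region reg X).

Definition fitted (b : R) (F : shapes) (k : 'I_N) : R := calm_score reg b F (X k).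

Definition sq_loss (b : R) (F : shapes) : R := \sum_k (Y k - fitted b F k) ^+ 2.

Definition shape_term (F : shapes) (i : 'I_d) (k : 'I_N) : R :=
  F (Tagged (fun j => 'I_(Rr j)) (reg i (col' i (X k)))) (X k ord0 i).

Lemma fittedE b F k : fitted b F k = b + \sum_i shape_term F i k.
Proof. by []. Qed.

Definition same_cell (i : 'I_d) (k0 k : 'I_N) : bool :=
  (reg i (col' i (X k0)) == reg i (col' i (X k))) && (X k0 ord0 i == X k ord0 i).

Lemma same_cell_equiv i : equivalence_rel (same_cell i).
Proof.
move=> k1 k2 k3; split; first by rewrite /same_cell !eqxx.
by rewrite /same_cell => /andP[/eqP -> /eqP ->].
Qed.

Lemma shape_term_cell F i k0 k : same_cell i k0 k -> shape_term F i k = shape_term F i k0.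
Proof. by rewrite /same_cell /shape_term => /andP[/eqP -> /eqP ->]. Qed.

Lemma in_region_cell (p : pairT) k0 k :
  same_cell (tag p) k0 k -> in_region p k = in_region p k0.
Proof. by rewrite /same_cell /in_region => /andP[/eqP -> _]. Qed.

Definition cell_sum (i : 'I_d) (k0 : 'I_N) (u : 'I_N -> R) : R :=
  \sum_k (same_cell i k0 k)%:R * u k.

Lemma cell_sumB i k0 u v :
  cell_sum i k0 (fun k => u k - v k) = cell_sum i k0 u - cell_sum i k0 v.
Proof. by rewrite /cell_sum -sumrB; apply: eq_bigr => k _; rewrite mulrBr. Qed.

Lemma cell_sum_sqr_le i k0 u : cell_sum i k0 u ^+ 2 <= N%:R * \sum_k u k ^+ 2.
Proof.
apply: le_trans (sqr_sumr_le_card _) _; rewrite card_ord ler_wpM2l // ler_sum // => k _.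
by case: same_cell; rewrite ?mul1r ?mul0r ?expr0n //= sqr_ge0.
Qed.

Lemma fitted_upd_shape (p : pairT) b F h k :
  fitted b (upd_shape F p h) k = fitted b F k +
    (if in_region p k then h (X k ord0 (tag p)) - F p (X k ord0 (tag p)) else 0).
Proof.
case: p => i r /=; rewrite !fittedE (bigD1 i) //= [in RHS](bigD1 i) //=.
rewrite [X in _ + (_ + X)](eq_bigr (shape_term F^~ k)); last first.
  move=> j ji; rewrite /shape_term /upd_shape; case: eqP => // /(congr1 tag) /= ji'.
  by rewrite ji' eqxx in ji.
rewrite /shape_term /upd_shape /in_region /= eq_Tagged /=.
by case: eqP => [-> | _]; [ring | rewrite addr0].
Qed.

Lemma region_lossE p b F :
  region_loss reg X Y p b F = \sum_k (in_region p k)%:R * (Y k - fitted b F k) ^+ 2.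
Proof.
rewrite /region_loss big_mkcond /=; apply: eq_bigr => k _.
by case: in_region; rewrite ?mul1r ?mul0r.
Qed.

(* Perturb the new shape function by [eps] at the single point [X k0 ord0 i]:
   exact minimality forces the first-order term, a cell sum of residuals, to
   vanish. *)
Lemma exact_block_step_cell_sum p b F b' F' k0 :
  exact_block_step reg X Y p b F b' F' -> in_region p k0 ->
  cell_sum (tag p) k0 (fun k => Y k - fitted b' F' k) = 0.
Proof.
case=> g [g_min fit'] k0p; set i := tag p; set x0 := X k0 ord0 i.
pose r k := Y k - fitted b (upd_shape F p g) k.
pose c k := in_region p k && (X k ord0 i == x0).
have -> : cell_sum i k0 (fun k => Y k - fitted b' F' k) = \sum_k (c k)%:R * r k.
  apply: eq_bigr => k _; rewrite /fitted fit' /c /same_cell.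
  by move: k0p; rewrite /in_region -/i => /eqP ->; rewrite eq_sym [x0 == _]eq_sym.
apply: (@linear_le_square_eq0 _ _ (\sum_k (c k)%:R)).
  by rewrite sumr_ge0 // => k _; rewrite ler0n.
move=> eps; pose h x := g x + (if x == x0 then eps else 0).
have perturb k : (in_region p k)%:R * (Y k - fitted b (upd_shape F p h) k) ^+ 2 =
    (in_region p k)%:R * r k ^+ 2 - 2 * eps * ((c k)%:R * r k) + eps ^+ 2 * (c k)%:R.
  rewrite /r /c !fitted_upd_shape /h -/i.
  by case: in_region => /=; [case: eqP => _ /= |]; ring.
have := g_min h; rewrite !region_lossE; under [X in _ <= X]eq_bigr do rewrite perturb.
rewrite big_split sumrB /= -!mulr_sumr; lra.
Qed.

(* The increment of the fitted values is constant on the cells of [tag p] and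
   vanishes off region [p], where the new residuals have zero cell sums. *)
Lemma exact_block_step_sq_loss p b F b' F' :
  exact_block_step reg X Y p b F b' F' ->
  sq_loss b F = sq_loss b' F' + \sum_k (fitted b' F' k - fitted b F k) ^+ 2.
Proof.
move=> step; have cell0 := exact_block_step_cell_sum step.
case: step => g [_ fit']; set i := tag p.
pose r' k := Y k - fitted b' F' k; pose delta k := fitted b' F' k - fitted b F k.
have deltaE k : delta k =
    if in_region p k then g (X k ord0 i) - F p (X k ord0 i) else 0.
  by rewrite /delta /fitted fit' -/(fitted _ _ k) fitted_upd_shape addrC addKr.
have orth : \sum_k r' k * delta k = 0.
  rewrite (eq_bigr (fun k => (if in_region p k then r' k else 0) * delta k)); last first.
    by move=> k _; rewrite deltaE; case: in_region; rewrite ?mulr0 ?mul0r.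
  apply: (class_sums_eq0_orthogonal (same_cell_equiv i)) => [k0 | k0 k k0k].
    case k0p: (in_region p k0); last first.
      by apply: big1 => k _; case: (boolP (same_cell i k0 k)) => [/in_region_cell -> | _];
        rewrite ?k0p ?mulr0 ?mul0r.
    rewrite -[RHS](cell0 _ k0p); apply: eq_bigr => k _.
    by case: (boolP (same_cell i k0 k)) => [/in_region_cell -> | _]; rewrite ?k0p ?mul0r.
  by rewrite !deltaE (in_region_cell k0k); case/andP: k0k => _ /eqP ->.
rewrite /sq_loss (eq_bigr (fun k => r' k ^+ 2 + 2 * (r' k * delta k) + delta k ^+ 2)).
  by rewrite !big_split /= -mulr_sumr orth mulr0 addr0.
by move=> k _; rewrite /r' /delta; ring.
Qed.

Local Notation ncells := #|{: 'I_N * 'I_d}|.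

Definition cellmx : 'M[R]_(ncells, N) :=
  \matrix_(j, k) (same_cell (enum_val j).2 (enum_val j).1 k)%:R.

Lemma cellmxE (x : 'I_N * 'I_d) k : cellmx (enum_rank x) k = (same_cell x.2 x.1 k)%:R.
Proof. by rewrite mxE enum_rankK. Qed.

Definition rowv (u : 'I_N -> R) : 'rV[R]_N := \row_k u k.

Lemma rowvB u v : rowv (fun k => u k - v k) = rowv u - rowv v.
Proof. by apply/rowP => k; rewrite !mxE. Qed.

Lemma mulmx_cellmx_tr u i k0 : (rowv u *m cellmx^T) 0 (enum_rank (k0, i)) = cell_sum i k0 u.
Proof. by rewrite mxE; apply: eq_bigr => k _; rewrite !mxE enum_rankK mulrC. Qed.

Hypothesis d_gt0 : (0 < d)%N.

(* Feature [ord0] makes the constant [b] a sum of cell indicators too. *)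
Lemma fitted_sub_cellmx b F : (rowv (fitted b F) <= cellmx)%MS.
Proof.
rewrite submxE; apply/eqP/rowP => c; rewrite !mxE.
pose u k := (cokermx cellmx) k c.
have cell0 i k0 : cell_sum i k0 u = 0.
  have := congr1 (fun M : 'M[R]_(ncells, N) => M (enum_rank (k0, i)) c) (mulmx_coker cellmx).
  by rewrite !mxE => <-; apply: eq_bigr => k _; rewrite cellmxE.
rewrite (eq_bigr (fun k => u k * (b + \sum_i shape_term F i k))); last first.
  by move=> k _; rewrite mxE mulrC.
under eq_bigr do rewrite mulrDr mulr_sumr.
have shape0 i : \sum_k u k * shape_term F i k = 0.
  exact: (class_sums_eq0_orthogonal (same_cell_equiv i) (cell0 i) (@shape_term_cell F i)).
have u0 : \sum_k u k = 0.
  under eq_bigr do rewrite -[u _]mulr1.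
  exact: (class_sums_eq0_orthogonal (same_cell_equiv (Ordinal d_gt0)) (cell0 _)).
rewrite big_split /= exchange_big /= (eq_bigr _ (fun i _ => shape0 i)) big1_eq.
by rewrite -mulr_suml u0 mul0r addr0.
Qed.

Definition proj (k : 'I_N) : R := lsq_proj cellmx (rowv Y) 0 k.

Lemma rowv_proj : rowv proj = lsq_proj cellmx (rowv Y).
Proof. by apply/rowP => k; rewrite mxE. Qed.

Lemma cell_sum_resid_proj i k0 : cell_sum i k0 (fun k => Y k - proj k) = 0.
Proof. by rewrite -mulmx_cellmx_tr rowvB rowv_proj lsq_normal_eq mxE. Qed.

Lemma fitted_proj_diff_sub_cellmx b F : (rowv (fitted b F) - rowv proj <= cellmx)%MS.
Proof. by rewrite addmx_sub ?eqmx_opp ?fitted_sub_cellmx // rowv_proj submxMl. Qed.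

Lemma sq_loss_proj b F :
  sq_loss b F = \sum_k (Y k - proj k) ^+ 2 + \sum_k (fitted b F k - proj k) ^+ 2.
Proof.
have orth : \sum_k (Y k - proj k) * (fitted b F k - proj k) = 0.
  transitivity (((rowv Y - rowv proj) *m (rowv (fitted b F) - rowv proj)^T) 0 0).
    by rewrite mxE; apply: eq_bigr => k _; rewrite !mxE.
  have := fitted_proj_diff_sub_cellmx b F.
  by rewrite rowv_proj => /(lsq_resid_orthogonal (rowv Y)) ->; rewrite mxE.
rewrite /sq_loss (eq_bigr (fun k => (Y k - proj k) ^+ 2 -
    2 * ((Y k - proj k) * (fitted b F k - proj k)) + (fitted b F k - proj k) ^+ 2)).
  by rewrite big_split sumrB /= -mulr_sumr orth mulr0 subr0.
by move=> k _; ring.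
Qed.

(* The coefficient of a cell [(k0, i)] goes to the shape function of feature
   [i] and the region of [k0], at the point [X k0 ord0 i]. *)
Definition proj_shapes : shapes := fun q t =>
  \sum_j lsq_coef cellmx (rowv Y) 0 j *
    [&& (enum_val j).2 == tag q,
        reg (tag q) (col' (tag q) (X (enum_val j).1)) == tagged q
      & X (enum_val j).1 ord0 (tag q) == t]%:R.

Lemma fitted_proj_shapes k : fitted 0 proj_shapes k = proj k.
Proof.
rewrite fittedE add0r /proj mxE /shape_term /proj_shapes /= exchange_big /=.
apply: eq_bigr => j _; rewrite -mulr_sumr mxE; congr (_ * _).
rewrite (bigD1 (enum_val j).2) //= eqxx big1 ?addr0 => [|i /negbTE ji].
  by rewrite mxE.
by rewrite eq_sym ji.
Qed.

Lemma emp_risk_calm_score b F :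
  emp_risk X Y (calm_score reg b F) =
  N%:R^-1 * (\sum_k (Y k - proj k) ^+ 2 + \sum_k (fitted b F k - proj k) ^+ 2).
Proof. by rewrite -sq_loss_proj. Qed.

Lemma emp_risk_proj_shapes :
  emp_risk X Y (calm_score reg 0 proj_shapes) = N%:R^-1 * \sum_k (Y k - proj k) ^+ 2.
Proof.
rewrite emp_risk_calm_score [X in _ + X]big1 ?addr0 // => k _.
by rewrite fitted_proj_shapes subrr expr0n.
Qed.

Lemma emp_risk_proj_shapes_le s :
  calm_class reg s -> emp_risk X Y (calm_score reg 0 proj_shapes) <= emp_risk X Y s.
Proof.
case=> b [F ->]; rewrite emp_risk_proj_shapes emp_risk_calm_score.
by rewrite ler_wpM2l ?invr_ge0 // lerDl sumr_sqr_ge0.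
Qed.

Lemma calm_minimizer_fitted s :
  calm_class reg s ->
  (forall s', calm_class reg s' -> emp_risk X Y s <= emp_risk X Y s') ->
  forall k, s (X k) = proj k.
Proof.
case=> b [F ->] s_min k.
have N_gt0 : 0 < N%:R^-1 :> R by rewrite invr_gt0 ltr0n (leq_ltn_trans _ (ltn_ord k)).
have := s_min _ (ex_intro _ 0 (ex_intro _ proj_shapes erefl)).
rewrite emp_risk_proj_shapes emp_risk_calm_score ler_pM2l // gerDl => dist_le0.
apply/eqP; rewrite -subr_eq0; apply/eqP; move: k; apply: sumr_sqr_eq0.
by apply/le_anti; rewrite dist_le0 sumr_sqr_ge0.
Qed.

Section Backfitting.
Variables (e : seq pairT) (b : nat -> R) (F : nat -> shapes).
Hypothesis e_all : forall p, p \in e.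
Hypothesis steps : forall n (j : 'I_(size e)),
  exact_block_step reg X Y (tnth (in_tuple e) j)
    (b (n * size e + j)%N) (F (n * size e + j)%N)
    (b (n * size e + j).+1) (F (n * size e + j).+1).

Local Notation M := (size e).
Local Notation f t := (fitted (b t) (F t)).

Definition proj_dist (t : nat) : R := \sum_k (f t k - proj k) ^+ 2.

Lemma size_e_gt0 : (0 < M)%N.
Proof. by have := e_all (Tagged (fun i => 'I_(Rr i)) (reg (Ordinal d_gt0) 0)); case: e. Qed.

Lemma exact_block_step_at t :
  exists p, exact_block_step reg X Y p (b t) (F t) (b t.+1) (F t.+1).
Proof.
have := steps (t %/ M) (Ordinal (ltn_pmod t size_e_gt0)).
by rewrite /= -divn_eq; exists (tnth (in_tuple e) (Ordinal (ltn_pmod t size_e_gt0))).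
Qed.

Lemma sq_loss_nonincreasing t : sq_loss (b t.+1) (F t.+1) <= sq_loss (b t) (F t).
Proof.
by have [p /exact_block_step_sq_loss ->] := exact_block_step_at t; rewrite lerDl sumr_sqr_ge0.
Qed.

Lemma proj_dist_step t :
  proj_dist t = proj_dist t.+1 + \sum_k (f t.+1 k - f t k) ^+ 2.
Proof.
have [p /exact_block_step_sq_loss] := exact_block_step_at t.
by rewrite !sq_loss_proj -addrA => /addrI.
Qed.

Lemma proj_dist_nonincreasing : nonincreasing_seq proj_dist.
Proof.
by apply/nonincreasing_seqP => t; rewrite [proj_dist t]proj_dist_step lerDl sumr_sqr_ge0.
Qed.

Lemma cell_sum_drift_le i k0 t m :
  cell_sum i k0 (fun k => f (t + m) k - f t k) ^+ 2 <=
    m%:R * N%:R * (proj_dist t - proj_dist (t + m)).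
Proof.
pose delta s k := f (t + s).+1 k - f (t + s) k.
have drift : cell_sum i k0 (fun k => f (t + m) k - f t k) =
    \sum_(s < m) cell_sum i k0 (delta s).
  rewrite /cell_sum exchange_big /=; apply: eq_bigr => k _; rewrite -mulr_sumr.
  rewrite -(big_mkord xpredT (delta^~ k)) (telescope_sumr_eq (fun s => f (t + s) k)) ?addn0 //.
  by move=> s _; rewrite /delta addnS.
have dist_drop : \sum_(s < m) \sum_k delta s k ^+ 2 = proj_dist t - proj_dist (t + m).
  rewrite -(big_mkord xpredT (fun s => \sum_k delta s k ^+ 2)).
  rewrite (telescope_sumr_eq (fun s => - proj_dist (t + s))) ?addn0 ?opprK 1?addrC //.
  by move=> s _; rewrite (proj_dist_step (t + s)) addnS; ring.
rewrite drift -dist_drop; apply: le_trans (sqr_sumr_le_card _) _.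
rewrite card_ord -mulrA ler_wpM2l // mulr_sumr ler_sum // => s _.
exact: cell_sum_sqr_le.
Qed.

(* Within the sweep starting at [n * M], the step on the pair [p] of the cell
   makes its residual cell sum vanish; before that the fitted values move by at
   most what the distance to [proj] drops during the sweep. *)
Lemma cell_sum_sweep_le n i k0 :
  cell_sum i k0 (fun k => Y k - f (n * M) k) ^+ 2 <=
    M%:R * N%:R * (proj_dist (n * M) - proj_dist (n * M + M)).
Proof.
set t0 := (n * M)%N; pose p := Tagged (fun i => 'I_(Rr i)) (reg i (col' i (X k0))).
have idx_lt : (index p e < M)%N by rewrite index_mem.
set idx := index p e in idx_lt.
have := steps n (Ordinal idx_lt); rewrite (tnth_nth p) /= nth_index // => step.
have := exact_block_step_cell_sum step (eqxx _); rewrite -addnS -/t0 => resid0.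
have -> : cell_sum i k0 (fun k => Y k - f t0 k) =
    cell_sum i k0 (fun k => f (t0 + idx.+1) k - f t0 k).
  by move/eqP: resid0; rewrite !cell_sumB subr_eq0 => /eqP ->.
apply: le_trans (cell_sum_drift_le _ _ _ _) _.
rewrite ler_pM ?mulr_ge0 ?subr_ge0 ?proj_dist_nonincreasing ?leq_addr ?ler_wpM2r //.
  by rewrite ler_nat.
by rewrite lerD2l lerN2 proj_dist_nonincreasing // leq_add2l.
Qed.

Definition sweep_const : R :=
  (\sum_k \sum_j pinvmx cellmx k j ^+ 2) * (ncells * M * N)%:R.

Lemma sweep_const_ge0 : 0 <= sweep_const.
Proof. by rewrite mulr_ge0 // sumr_ge0 // => k _; exact: sumr_sqr_ge0. Qed.

Lemma proj_dist_sweep_le n :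
  proj_dist (n * M) <= sweep_const * (proj_dist (n * M) - proj_dist (n * M + M)).
Proof.
set t0 := (n * M)%N; set D := proj_dist t0 - proj_dist (t0 + M).
have entry j : ((rowv (f t0) - rowv proj) *m cellmx^T) 0 j ^+ 2 <= M%:R * N%:R * D.
  rewrite -(enum_valK j); case: (enum_val j) => k0 i.
  have /eqP := cell_sum_resid_proj i k0; rewrite !cell_sumB subr_eq0 => /eqP Y_proj.
  rewrite -rowvB mulmx_cellmx_tr cell_sumB -Y_proj -opprB sqrrN -cell_sumB.
  exact: cell_sum_sweep_le.
have := sqnorm_le_pinvmx (fitted_proj_diff_sub_cellmx (b t0) (F t0)).
have -> : \sum_k (rowv (f t0) - rowv proj) 0 k ^+ 2 = proj_dist t0.
  by apply: eq_bigr => k _; rewrite !mxE.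
move/le_trans; apply; rewrite /sweep_const -mulrA; apply: ler_wpM2l.
  by rewrite sumr_ge0 // => k _; exact: sumr_sqr_ge0.
apply: le_trans (ler_sum _ (fun j _ => entry j)) _.
by rewrite sumr_const card_ord -[X in X <= _]mulr_natl !natrM !mulrA.
Qed.

Lemma proj_dist_sweep_contract n :
  proj_dist (n.+1 * M) <= sweep_const / (sweep_const + 1) * proj_dist (n * M).
Proof.
have K_ge0 := sweep_const_ge0.
have le_K := proj_dist_sweep_le n.
have y_le_x : proj_dist (n * M + M) <= proj_dist (n * M).
  by apply: proj_dist_nonincreasing; rewrite leq_addr.
rewrite mulSn [(M + _)%N]addnC mulrAC ler_pdivlMr ?ltr_wpDl //; nra.
Qed.

Lemma proj_dist_geometric t :
  proj_dist t <= (sweep_const / (sweep_const + 1)) ^+ (t %/ M) * proj_dist 0.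
Proof.
have q_ge0 : 0 <= sweep_const / (sweep_const + 1).
  by rewrite divr_ge0 ?addr_ge0 ?sweep_const_ge0.
apply: le_trans (proj_dist_nonincreasing (leq_divM t M)) _.
elim: (t %/ M)%N => [|n IH]; first by rewrite mul0n expr0 mul1r.
apply: le_trans (proj_dist_sweep_contract n) _.
by rewrite exprS -[X in _ <= X]mulrA; apply: ler_wpM2l.
Qed.

Lemma proj_dist_cvg0 : (fun t => N%:R^-1 * proj_dist t) @ \oo --> 0.
Proof.
set q := sweep_const / (sweep_const + 1).
have q_lt1 : `|q| < 1.
  rewrite ger0_norm ?divr_ge0 ?addr_ge0 ?sweep_const_ge0 //.
  by rewrite ltr_pdivrMr ?mul1r ?ltrDl // ltr_wpDl // sweep_const_ge0.
have geom : (fun t => N%:R^-1 * (q ^+ (t %/ M)%N * proj_dist 0)) @ \oo --> 0.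
  rewrite -(mulr0 N%:R^-1) -(mul0r (proj_dist 0)); apply: cvgMr; apply: cvgMl.
  exact: cvg_comp (cvg_divnr _ size_e_gt0) (cvg_expr q_lt1).
have bound t : 0 <= N%:R^-1 * proj_dist t <= N%:R^-1 * (q ^+ (t %/ M) * proj_dist 0).
  by rewrite mulr_ge0 ?invr_ge0 ?sumr_sqr_ge0 // ler_wpM2l ?invr_ge0 ?proj_dist_geometric.
have cst0 : (fun _ : nat => 0 : R) @ \oo --> 0 by exact: cvg_cst.
exact (squeeze_cvgr (nearW _ bound) cst0 geom).
Qed.

End Backfitting.

End CALM.

Theorem propositionA3 (R : realType) (d : nat) (Rr : 'I_d -> nat)
    (reg : forall i : 'I_d, 'rV[R]_(d.-1) -> 'I_(Rr i))
    (N : nat) (X : 'I_N -> 'rV[R]_d) (Y : 'I_N -> R)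
    (e : seq (pairT Rr)) (b : nat -> R) (F : nat -> shapes R Rr) :
  (0 < d)%N ->
  uniq e -> (forall p : pairT Rr, p \in e) ->
  (forall (n : nat) (j : 'I_(size e)),
      exact_block_step reg X Y (tnth (in_tuple e) j)
        (b (n * size e + j)%N) (F (n * size e + j)%N)
        (b (n * size e + j).+1) (F (n * size e + j).+1)) ->
  (forall t : nat,
      emp_risk X Y (calm_score reg (b t.+1) (F t.+1))
        <= emp_risk X Y (calm_score reg (b t) (F t)))
  /\ (exists shat : 'rV[R]_d -> R,
        calm_class reg shat
        /\ (forall s, calm_class reg s -> emp_risk X Y shat <= emp_risk X Y s)
        /\ (fun t : nat => N%:R^-1 * \sum_(k < N)
              (calm_score reg (b t) (F t) (X k) - shat (X k)) ^+ 2) @ \oo --> 0)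
  /\ (forall s1 s2 : 'rV[R]_d -> R,
        calm_class reg s1 -> calm_class reg s2 ->
        (forall s, calm_class reg s -> emp_risk X Y s1 <= emp_risk X Y s) ->
        (forall s, calm_class reg s -> emp_risk X Y s2 <= emp_risk X Y s) ->
        forall k : 'I_N, s1 (X k) = s2 (X k)).
Proof.
move=> d_gt0 _ e_all steps; split.
  move=> t; apply: ler_wpM2l; first by rewrite invr_ge0.
  exact: (sq_loss_nonincreasing d_gt0 e_all steps).
split.
  exists (calm_score reg 0 (proj_shapes reg X Y)).
  split; first by exists 0, (proj_shapes reg X Y).
  split; first exact: emp_risk_proj_shapes_le.
  have -> : (fun t => N%:R^-1 * \sum_(k < N) (calm_score reg (b t) (F t) (X k) -
      calm_score reg 0 (proj_shapes reg X Y) (X k)) ^+ 2) =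
      (fun t => N%:R^-1 * proj_dist reg X Y b F t).
    apply/funext => t; congr (_ * _); apply: eq_bigr => k _.
    by rewrite -(fitted_proj_shapes reg X Y k).
  exact (proj_dist_cvg0 d_gt0 e_all steps).
move=> s1 s2 s1_calm s2_calm s1_min s2_min k.
rewrite (calm_minimizer_fitted d_gt0 s1_calm s1_min).
by rewrite (calm_minimizer_fitted d_gt0 s2_calm s2_min).
Qed.
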